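(* Let $\Omega\subset\mathbb{R}^2$ be open, $\lambda>0$, and let $u\in L^2(\Omega)$ satisfy $-\Delta u=\lambda u$ in $\Omega$. Let $\mathbf{x}_0\in\Omega$, $h>0$, $\alpha\in(0,1)$, and let $\mathbf{e}^-,\mathbf{e}^+$ be unit vectors with angle $\alpha\pi$ from $\mathbf{e}^-$ to $\mathbf{e}^+$; put $\Gamma^\pm=\{\mathbf{x}_0+t\mathbf{e}^\pm:0\le t\le h\}\subset\Omega$. Suppose $\partial_\nu u+\eta_2u=0$ on $\Gamma^+$, where $\eta_2\in C^1(\Gamma^+)$ is complex-valued and $\nu$ is a unit normal to $\Gamma^+$, and $u=0$ on $\Gamma^-$. If $\alpha\notin\{\frac14,\frac12,\frac34\}$, then $u$ vanishes up to the order $3$ at $\mathbf{x}_0$, i.e. $u$ and all its partial derivatives of order $1$ and $2$ vanish at $\mathbf{x}_0$.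
   Context: No boundary condition is imposed on $\partial\Omega$; $u$ is real-analytic in $\Omega$. *)

From Stdlib Require Import Reals List.
From Coquelicot Require Import Coquelicot.
Open Scope R_scope.

Definition pt_add (p q : R * R) : R * R := (fst p + fst q, snd p + snd q).
Definition pt_scal (t : R) (p : R * R) : R * R := (t * fst p, t * snd p).

Definition dC (g : R -> C) (t : R) : C :=
  (Derive (fun s => Re (g s)) t, Derive (fun s => Im (g s)) t).

Definition pd1 (f : R * R -> C) : R * R -> C :=
  fun p => dC (fun t => f (t, snd p)) (fst p).
Definition pd2 (f : R * R -> C) : R * R -> C :=
  fun p => dC (fun t => f (fst p, t)) (snd p).

(* Iterated partial derivative along a word: false = d/dx1, true = d/dx2. *)
Definition iter_pd (w : list bool) (f : R * R -> C) : R * R -> C :=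
  fold_right (fun (b : bool) (g : R * R -> C) => if b then pd2 g else pd1 g) f w.

Definition smooth_on (Om : R * R -> Prop) (f : R * R -> C) : Prop :=
  forall (w : list bool) (p : R * R), Om p ->
    ex_derive (fun t => Re (iter_pd w f (t, snd p))) (fst p) /\
    ex_derive (fun t => Im (iter_pd w f (t, snd p))) (fst p) /\
    ex_derive (fun t => Re (iter_pd w f (fst p, t))) (snd p) /\
    ex_derive (fun t => Im (iter_pd w f (fst p, t))) (snd p) /\
    continuous (fun q : R * R => Re (iter_pd w f q)) p /\
    continuous (fun q : R * R => Im (iter_pd w f q)) p.

Definition lap (f : R * R -> C) : R * R -> C :=
  fun p => Cplus (pd1 (pd1 f) p) (pd2 (pd2 f) p).

Definition ddir (v : R * R) (f : R * R -> C) : R * R -> C :=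
  fun p => Cplus (Cmult (RtoC (fst v)) (pd1 f p)) (Cmult (RtoC (snd v)) (pd2 f p)).

Definition rot (a : R) (v : R * R) : R * R :=
  (cos a * fst v - sin a * snd v, sin a * fst v + cos a * snd v).

(* eta : R -> C (parametrised by arc length t in [0,h]) is C^1 on [0,h]. *)
Definition C1_on_interval (a b : R) (eta : R -> C) : Prop :=
  forall t, a <= t <= b ->
    ex_derive (fun s => Re (eta s)) t /\ ex_derive (fun s => Im (eta s)) t /\
    continuous (Derive (fun s => Re (eta s))) t /\
    continuous (Derive (fun s => Im (eta s))) t.

(* At the corner, the Dirichlet condition on [Gamma^-] kills [u x0] and every derivative of [u]
   along [e^-]; the Robin condition on [Gamma^+] then kills the derivative along [nu], because the
   [eta2 u] term vanishes at [x0].  As [nu] and [e^-] are independent unless [alpha = 1/2], the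
   gradient vanishes.  Differentiating both boundary conditions once more along their segments
   gives [e^-.H e^- = 0] and [nu.H e^+ = 0] for the Hessian [H], which is symmetric and, by the
   Helmholtz equation and [u x0 = 0], traceless.  For [H = [[a, b], [b, -a]]] these two equations
   are a linear system in [(a, b)] of determinant [- cos (2 alpha PI)], which is nonzero unless
   [alpha] is [1/4] or [3/4]. *)

From Stdlib Require Import Reals List Lra Lia.
From Coquelicot Require Import Coquelicot.
Open Scope R_scope.

Lemma is_derive_eq0_of_vanishing_right (f : R -> R) (t d l : R) :
  0 < d -> (forall s, t <= s <= t + d -> f s = 0) -> is_derive f t l -> l = 0.
Proof.
  intros Hd Hf Hl; apply is_derive_Reals in Hl.
  destruct (Req_dec l 0) as [|Hl0]; [assumption | exfalso].
  destruct (Hl (Rabs l) (Rabs_pos_lt _ Hl0)) as [[delta Hdelta] Hquot]; simpl in Hquot.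
  set (k := Rmin d (delta / 2)).
  assert (Hk : 0 < k <= d /\ k < delta).
  { unfold k; split; [split; [apply Rmin_pos | apply Rmin_l] |
                      eapply Rle_lt_trans; [apply Rmin_r |]]; lra. }
  specialize (Hquot k ltac:(lra)).
  rewrite Rabs_pos_eq, !Hf in Hquot by lra.
  replace ((0 - 0) / k - l) with (- l) in Hquot by (field; lra).
  rewrite Rabs_Ropp in Hquot; lra.
Qed.

Lemma is_derive_comp_2d (F D1 : R -> R -> R) (D2 : R) (f g : R -> R) (t df dg : R) :
  locally (f t, g t) (fun q => is_derive (fun z => F z (snd q)) (fst q) (D1 (fst q) (snd q))) ->
  is_derive (fun z => F (f t) z) (g t) D2 ->
  continuous (fun q => D1 (fst q) (snd q)) (f t, g t) ->
  is_derive f t df -> is_derive g t dg ->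
  is_derive (fun s => F (f s) (g s)) t (df * D1 (f t) (g t) + dg * D2).
Proof.
  intros H1 H2 Hc Hf Hg.
  eapply filterdiff_ext_lin.
  - exact (filterdiff_comp'_2 f g F t _ _ (fun x y => plus (scal x (D1 (f t) (g t))) (scal y D2))
      Hf Hg (is_derive_filterdiff F _ _ D1 D2 H1 H2 Hc)).
  - intros s; unfold plus, scal, mult; cbn; ring.
Qed.

Lemma is_derive_mult_vanishing (E Z : R -> R) (t e : R) :
  is_derive E t e -> is_derive Z t 0 -> Z t = 0 -> is_derive (fun s => E s * Z s) t 0.
Proof.
  intros HE HZ HZt.
  assert (H := is_derive_mult E Z t e 0 HE HZ Rmult_comm).
  unfold plus, mult in H; cbn in H.
  rewrite HZt, Rmult_0_r, Rmult_0_r, Rplus_0_r in H; exact H.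
Qed.

(* Everything below is real-linear in [u], so the argument is run on the real ([false]) and
   imaginary ([true]) parts separately. *)
Definition cpart (b : bool) (z : C) : R := if b then Im z else Re z.

Lemma cpart_pd1 b g p : cpart b (pd1 g p) = Derive (fun x => cpart b (g (x, snd p))) (fst p).
Proof. now destruct b. Qed.

Lemma cpart_pd2 b g p : cpart b (pd2 g p) = Derive (fun y => cpart b (g (fst p, y))) (snd p).
Proof. now destruct b. Qed.

Lemma cpart_Cplus b z w : cpart b (Cplus z w) = cpart b z + cpart b w.
Proof. now destruct b. Qed.

Lemma cpart_RtoC_mult b r z : cpart b (Cmult (RtoC r) z) = r * cpart b z.
Proof. destruct z, b; unfold cpart, Cmult, RtoC, Re, Im; cbn; ring. Qed.

Lemma cpart_RtoC0 b : cpart b (RtoC 0) = 0.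
Proof. now destruct b. Qed.

Lemma cpart_mult0 b z : cpart b (Cmult z (RtoC 0)) = 0.
Proof. destruct z, b; unfold cpart, Cmult, RtoC, Re, Im; cbn; ring. Qed.

Lemma C_eq_of_cpart z w : (forall b, cpart b z = cpart b w) -> z = w.
Proof.
  intros Hzw; destruct z as [x y], w as [x' y'].
  assert (Hx := Hzw false); assert (Hy := Hzw true); cbn in Hx, Hy; now subst.
Qed.

Lemma cpart_ddir b v f p :
  cpart b (ddir v f p) = fst v * cpart b (pd1 f p) + snd v * cpart b (pd2 f p).
Proof. destruct b; unfold cpart, ddir, Cplus, Cmult, RtoC, Re, Im; cbn; ring. Qed.

Lemma is_derive_cpart_Cmult_vanishing (g z : R -> C) t b :
  ex_derive (fun s => Re (g s)) t -> ex_derive (fun s => Im (g s)) t ->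
  (forall b', is_derive (fun s => cpart b' (z s)) t 0) -> z t = RtoC 0 ->
  is_derive (fun s => cpart b (Cmult (g s) (z s))) t 0.
Proof.
  intros Hre Him Hz Hzt.
  assert (Hprod : forall b1 b2, is_derive (fun s => cpart b1 (g s) * cpart b2 (z s)) t 0).
  { intros b1 b2; apply (is_derive_mult_vanishing _ _ _ (Derive (fun s => cpart b1 (g s)) t)).
    - apply Derive_correct; now destruct b1.
    - apply Hz.
    - now rewrite Hzt, cpart_RtoC0. }
  destruct b.
  - assert (H := is_derive_plus _ _ t _ _ (Hprod false true) (Hprod true false)).
    unfold plus in H; cbn in H; rewrite Rplus_0_r in H.
    refine (is_derive_ext _ _ _ _ _ H); intros s; destruct (g s), (z s); cbn; ring.
  - assert (H := is_derive_minus _ _ t _ _ (Hprod false false) (Hprod true true)).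
    unfold minus, plus, opp in H; cbn in H; rewrite Ropp_0, Rplus_0_r in H.
    refine (is_derive_ext _ _ _ _ _ H); intros s; destruct (g s), (z s); cbn; ring.
Qed.

Lemma pt_line0 x e : pt_add x (pt_scal 0 e) = x.
Proof. destruct x; unfold pt_add, pt_scal; cbn; f_equal; ring. Qed.

Lemma iter_pd_app (w w' : list bool) f : iter_pd w (iter_pd w' f) = iter_pd (w ++ w') f.
Proof. unfold iter_pd; now rewrite fold_right_app. Qed.

Lemma smooth_on_iter_pd Om f w : smooth_on Om f -> smooth_on Om (iter_pd w f).
Proof. intros Hs w' p; rewrite iter_pd_app; apply Hs. Qed.

Lemma smooth_on_pd1 Om f : smooth_on Om f -> smooth_on Om (pd1 f).
Proof. exact (smooth_on_iter_pd Om f (false :: nil)). Qed.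

Lemma smooth_on_pd2 Om f : smooth_on Om f -> smooth_on Om (pd2 f).
Proof. exact (smooth_on_iter_pd Om f (true :: nil)). Qed.

Section SmoothAccess.

Variables (Om : R * R -> Prop) (f : R * R -> C).
Hypothesis (Hf : smooth_on Om f).

Lemma ex_derive_cpart_x b p : Om p -> ex_derive (fun t => cpart b (f (t, snd p))) (fst p).
Proof. intros Hp; destruct (Hf nil p Hp) as (H1 & H2 & _); now destruct b. Qed.

Lemma ex_derive_cpart_y b p : Om p -> ex_derive (fun t => cpart b (f (fst p, t))) (snd p).
Proof. intros Hp; destruct (Hf nil p Hp) as (_ & _ & H3 & H4 & _); now destruct b. Qed.

Lemma continuous_cpart b p : Om p -> continuous (fun q => cpart b (f q)) p.
Proof. intros Hp; destruct (Hf nil p Hp) as (_ & _ & _ & _ & H5 & H6); now destruct b. Qed.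

End SmoothAccess.

Section Smooth.

Variable (Om : R * R -> Prop).
Hypothesis (HOm : open Om).

Lemma is_derive_cpart_line f b x0 e t :
  smooth_on Om f -> Om (pt_add x0 (pt_scal t e)) ->
  is_derive (fun s => cpart b (f (pt_add x0 (pt_scal s e)))) t
    (cpart b (ddir e f (pt_add x0 (pt_scal t e)))).
Proof.
  intros Hf Hp; rewrite cpart_ddir.
  apply (is_derive_comp_2d (fun x y => cpart b (f (x, y))) (fun x y => cpart b (pd1 f (x, y))) _
           (fun s => fst x0 + s * fst e) (fun s => snd x0 + s * snd e)).
  - apply (locally_open Om); [exact HOm | | exact Hp].
    intros q Hq; rewrite cpart_pd1.
    apply Derive_correct; exact (ex_derive_cpart_x Om f Hf b q Hq).
  - rewrite cpart_pd2.
    apply Derive_correct; exact (ex_derive_cpart_y Om f Hf b _ Hp).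
  - apply (continuous_ext (fun q => cpart b (pd1 f q))); [now intros [x y] |].
    exact (continuous_cpart Om _ (smooth_on_pd1 Om f Hf) b _ Hp).
  - auto_derive; [exact I | ring].
  - auto_derive; [exact I | ring].
Qed.

Lemma is_derive_cpart_ddir_line f b v x0 e t :
  smooth_on Om f -> Om (pt_add x0 (pt_scal t e)) ->
  is_derive (fun s => cpart b (ddir v f (pt_add x0 (pt_scal s e)))) t
    (fst v * cpart b (ddir e (pd1 f) (pt_add x0 (pt_scal t e)))
     + snd v * cpart b (ddir e (pd2 f) (pt_add x0 (pt_scal t e)))).
Proof.
  intros Hf Hp.
  apply (is_derive_ext (fun s => fst v * cpart b (pd1 f (pt_add x0 (pt_scal s e)))
                              + snd v * cpart b (pd2 f (pt_add x0 (pt_scal s e))))).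
  { intros s; symmetry; apply cpart_ddir. }
  apply (is_derive_plus (V := R_NormedModule)); apply is_derive_scal, is_derive_cpart_line; trivial.
  - exact (smooth_on_pd1 Om f Hf).
  - exact (smooth_on_pd2 Om f Hf).
Qed.

Lemma pd1_pd2_comm f p : smooth_on Om f -> Om p -> pd1 (pd2 f) p = pd2 (pd1 f) p.
Proof.
  intros Hf Hp; apply C_eq_of_cpart; intros b.
  rewrite cpart_pd1, cpart_pd2; destruct p as [x0 y0]; cbn [fst snd].
  rewrite (Derive_ext (fun x => cpart b (pd2 f (x, y0)))
             (fun x => Derive (fun y => cpart b (f (x, y))) y0))
    by (intros; now rewrite cpart_pd2).
  rewrite (Derive_ext (fun y => cpart b (pd1 f (x0, y)))
             (fun y => Derive (fun x => cpart b (f (x, y))) x0))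
    by (intros; now rewrite cpart_pd1).
  apply (Schwarz (fun x y => cpart b (f (x, y)))).
  - apply locally_2d_locally, (locally_open Om); [exact HOm | | exact Hp].
    intros q Hq; repeat split.
    + exact (ex_derive_cpart_x Om f Hf b q Hq).
    + exact (ex_derive_cpart_y Om f Hf b q Hq).
    + apply (ex_derive_ext (fun x => cpart b (pd2 f (x, snd q))));
        [intros; now rewrite cpart_pd2 |].
      exact (ex_derive_cpart_x Om _ (smooth_on_pd2 Om f Hf) b q Hq).
    + apply (ex_derive_ext (fun y => cpart b (pd1 f (fst q, y))));
        [intros; now rewrite cpart_pd1 |].
      exact (ex_derive_cpart_y Om _ (smooth_on_pd1 Om f Hf) b q Hq).
  - apply continuity_2d_pt_filterlim.
    apply (continuous_ext (fun q => cpart b (pd1 (pd2 f) q))).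
    { intros [x y]; rewrite cpart_pd1; apply Derive_ext; intros; now rewrite cpart_pd2. }
    exact (continuous_cpart Om _ (smooth_on_iter_pd Om f (false :: true :: nil) Hf) b _ Hp).
  - apply continuity_2d_pt_filterlim.
    apply (continuous_ext (fun q => cpart b (pd2 (pd1 f) q))).
    { intros [x y]; rewrite cpart_pd2; apply Derive_ext; intros; now rewrite cpart_pd1. }
    exact (continuous_cpart Om _ (smooth_on_iter_pd Om f (true :: false :: nil) Hf) b _ Hp).
Qed.

End Smooth.

Lemma cos_eq0_in_0_PI x : 0 <= x <= PI -> cos x = 0 -> x = PI / 2.
Proof.
  intros Hx Hcos; assert (HPI := PI_RGT_0).
  apply cos_inj; [exact Hx | lra | now rewrite Hcos, cos_PI2].
Qed.

Lemma cos_mult_PI_neq0 a : 0 < a < 1 -> a <> 1 / 2 -> cos (a * PI) <> 0.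
Proof.
  intros Ha Hhalf Hcos; assert (HPI := PI_RGT_0).
  apply Hhalf, (Rmult_eq_reg_r PI); [| lra].
  rewrite (cos_eq0_in_0_PI (a * PI)); [lra | nra | exact Hcos].
Qed.

Lemma cos_2_mult_PI_neq0 a : 0 < a < 1 -> a <> 1 / 4 -> a <> 3 / 4 -> cos (2 * (a * PI)) <> 0.
Proof.
  intros Ha Hquarter H3quarter Hcos; assert (HPI := PI_RGT_0).
  destruct (Rle_dec (2 * (a * PI)) PI) as [Hle | Hgt].
  - apply Hquarter, (Rmult_eq_reg_r PI); [| lra].
    enough (2 * (a * PI) = PI / 2) by lra.
    apply cos_eq0_in_0_PI; [nra | exact Hcos].
  - apply H3quarter, (Rmult_eq_reg_r PI); [| lra].
    enough (2 * (a * PI) - PI = PI / 2) by lra.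
    apply cos_eq0_in_0_PI; [nra |].
    assert (Hshift := neg_cos (2 * (a * PI) - PI)).
    replace (2 * (a * PI) - PI + PI) with (2 * (a * PI)) in Hshift by ring.
    lra.
Qed.

Lemma cramer2_eq0 a b c d x y :
  a * d - b * c <> 0 -> a * x + b * y = 0 -> c * x + d * y = 0 -> x = 0 /\ y = 0.
Proof.
  intros Hdet H1 H2; split; apply (Rmult_eq_reg_r (a * d - b * c)); try exact Hdet.
  - replace (x * (a * d - b * c)) with (d * (a * x + b * y) - b * (c * x + d * y)) by ring.
    rewrite H1, H2; ring.
  - replace (y * (a * d - b * c)) with (a * (c * x + d * y) - c * (a * x + b * y)) by ring.
    rewrite H1, H2; ring.
Qed.

Lemma cross_eq0_of_common_normal n1 n2 p1 p2 g1 g2 :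
  (n1, n2) <> (0, 0) -> n1 * p1 + n2 * p2 = 0 -> n1 * g1 + n2 * g2 = 0 ->
  g1 * p2 - g2 * p1 = 0.
Proof.
  intros Hn Hp Hg.
  assert (H1 : n1 * (g1 * p2 - g2 * p1) = 0).
  { replace (n1 * (g1 * p2 - g2 * p1)) with ((n1 * g1 + n2 * g2) * p2 - g2 * (n1 * p1 + n2 * p2))
      by ring.
    rewrite Hp, Hg; ring. }
  assert (H2 : n2 * (g1 * p2 - g2 * p1) = 0).
  { replace (n2 * (g1 * p2 - g2 * p1)) with (g1 * (n1 * p1 + n2 * p2) - p1 * (n1 * g1 + n2 * g2))
      by ring.
    rewrite Hp, Hg; ring. }
  destruct (Req_dec n1 0) as [Hn1 | Hn1].
  - destruct (Rmult_integral _ _ H2) as [Hn2 | ]; [| assumption].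
    now subst.
  - destruct (Rmult_integral _ _ H1); [contradiction | assumption].
Qed.

Lemma orth_rot_normal_eq0 th (m n p : R * R) g1 g2 :
  p = rot th m -> cos th <> 0 -> fst m ^ 2 + snd m ^ 2 = 1 -> n <> (0, 0) ->
  fst n * fst p + snd n * snd p = 0 ->
  fst m * g1 + snd m * g2 = 0 -> fst n * g1 + snd n * g2 = 0 -> g1 = 0 /\ g2 = 0.
Proof.
  intros -> Hcos Hm Hn Hnp Hmg Hng.
  destruct m as [m1 m2], n as [n1 n2]; unfold rot in *; cbn [fst snd] in *.
  assert (Hpar := cross_eq0_of_common_normal _ _ _ _ _ _ Hn Hnp Hng).
  apply (cramer2_eq0 m1 m2 (sin th * m1 + cos th * m2) (- (cos th * m1 - sin th * m2)));
    [| exact Hmg | rewrite <- Hpar; ring].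
  replace (m1 * - (cos th * m1 - sin th * m2) - m2 * (sin th * m1 + cos th * m2))
    with (- cos th * (m1 ^ 2 + m2 ^ 2)) by ring.
  rewrite Hm; lra.
Qed.

Lemma traceless_form_eq0 th (m n p : R * R) a b d :
  p = rot th m -> cos (2 * th) <> 0 -> fst m ^ 2 + snd m ^ 2 = 1 -> n <> (0, 0) ->
  fst n * fst p + snd n * snd p = 0 -> a + d = 0 ->
  fst m * (fst m * a + snd m * b) + snd m * (fst m * b + snd m * d) = 0 ->
  fst n * (fst p * a + snd p * b) + snd n * (fst p * b + snd p * d) = 0 ->
  a = 0 /\ b = 0 /\ d = 0.
Proof.
  intros Hrot Hcos Hm Hn Hnp Htr Hmm Hnp'.
  replace d with (- a) in * by lra.
  subst p; destruct m as [m1 m2], n as [n1 n2]; unfold rot in *; cbn [fst snd] in *.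
  assert (Hpar := cross_eq0_of_common_normal _ _ _ _ _ _ Hn Hnp Hnp').
  rewrite cos_2a in Hcos.
  set (c := cos th) in *; set (s := sin th) in *.
  enough (a = 0 /\ b = 0) by lra.
  apply (cramer2_eq0 (m1 ^ 2 - m2 ^ 2) (2 * m1 * m2)
           (2 * (c * m1 - s * m2) * (s * m1 + c * m2))
           ((s * m1 + c * m2) ^ 2 - (c * m1 - s * m2) ^ 2));
    [| rewrite <- Hmm; ring | rewrite <- Hpar; ring].
  (* [(p1^2 - p2^2, 2 p1 p2)] is [(m1^2 - m2^2, 2 m1 m2)] rotated by [2 th]. *)
  replace (_ - _) with (- (c * c - s * s) * (m1 ^ 2 + m2 ^ 2) ^ 2) by ring.
  rewrite Hm; lra.
Qed.

Section Corner.

Variables (Om : R * R -> Prop) (u : R * R -> C) (x0 em ep nu : R * R) (h th lam : R)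
  (eta2 : R -> C).
Hypotheses (HOm : open Om) (Hu : smooth_on Om u) (Hh : 0 < h)
  (Hlap : lap u x0 = Cmult (RtoC (- lam)) (u x0))
  (Hx0 : Om x0) (Hep : ep = rot th em) (Hem : fst em ^ 2 + snd em ^ 2 = 1)
  (Hnu : nu <> (0, 0)) (Hnu_ep : fst nu * fst ep + snd nu * snd ep = 0)
  (Hcos : cos th <> 0) (Hcos2 : cos (2 * th) <> 0)
  (Hem_Om : forall t, 0 <= t <= h -> Om (pt_add x0 (pt_scal t em)))
  (Hep_Om : forall t, 0 <= t <= h -> Om (pt_add x0 (pt_scal t ep)))
  (Heta_re : ex_derive (fun s => Re (eta2 s)) 0) (Heta_im : ex_derive (fun s => Im (eta2 s)) 0)
  (Hrobin : forall t, 0 <= t <= h ->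
     Cplus (ddir nu u (pt_add x0 (pt_scal t ep)))
           (Cmult (eta2 t) (u (pt_add x0 (pt_scal t ep)))) = RtoC 0)
  (Hdirichlet : forall t, 0 <= t <= h -> u (pt_add x0 (pt_scal t em)) = RtoC 0).

Lemma u_x0_eq0 : u x0 = RtoC 0.
Proof. rewrite <- (pt_line0 x0 em); apply Hdirichlet; lra. Qed.

Lemma cpart_robin_eq0 b t : 0 <= t <= h ->
  cpart b (ddir nu u (pt_add x0 (pt_scal t ep)))
  + cpart b (Cmult (eta2 t) (u (pt_add x0 (pt_scal t ep)))) = 0.
Proof. intros Ht; now rewrite <- cpart_Cplus, Hrobin, cpart_RtoC0. Qed.

Lemma ddir_em_eq0 b t : 0 <= t < h -> cpart b (ddir em u (pt_add x0 (pt_scal t em))) = 0.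
Proof.
  intros Ht.
  apply (is_derive_eq0_of_vanishing_right
           (fun s => cpart b (u (pt_add x0 (pt_scal s em)))) t (h - t));
    [lra | | apply (is_derive_cpart_line Om HOm); [exact Hu | apply Hem_Om; lra]].
  intros s Hs; rewrite Hdirichlet by lra; apply cpart_RtoC0.
Qed.

Lemma grad_x0_eq0 b : cpart b (pd1 u x0) = 0 /\ cpart b (pd2 u x0) = 0.
Proof.
  apply (orth_rot_normal_eq0 th em nu ep); trivial.
  - rewrite <- cpart_ddir, <- (pt_line0 x0 em); apply ddir_em_eq0; lra.
  - assert (H := cpart_robin_eq0 b 0 ltac:(lra)).
    rewrite pt_line0, u_x0_eq0, cpart_mult0, cpart_ddir in H; lra.
Qed.

Lemma is_derive_u_ep0 b : is_derive (fun s => cpart b (u (pt_add x0 (pt_scal s ep)))) 0 0.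
Proof.
  assert (H := is_derive_cpart_line Om HOm u b x0 ep 0 Hu (Hep_Om 0 ltac:(lra))).
  rewrite pt_line0, cpart_ddir in H.
  destruct (grad_x0_eq0 b) as [G1 G2].
  rewrite G1, G2, !Rmult_0_r, Rplus_0_r in H; exact H.
Qed.

Lemma hess_x0_eq0 b :
  cpart b (pd1 (pd1 u) x0) = 0 /\ cpart b (pd2 (pd1 u) x0) = 0 /\ cpart b (pd2 (pd2 u) x0) = 0.
Proof.
  assert (Hsym := pd1_pd2_comm Om HOm u x0 Hu Hx0).
  apply (traceless_form_eq0 th em nu ep); trivial.
  - assert (H := f_equal (cpart b) Hlap).
    unfold lap in H; rewrite cpart_Cplus, cpart_RtoC_mult, u_x0_eq0, cpart_RtoC0 in H; lra.
  - assert (H := is_derive_cpart_ddir_line Om HOm u b em x0 em 0 Hu (Hem_Om 0 ltac:(lra))).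
    rewrite pt_line0, !cpart_ddir, Hsym in H.
    apply (is_derive_eq0_of_vanishing_right _ 0 (h / 2)) in H; [exact H | lra |].
    intros s Hs; apply ddir_em_eq0; lra.
  - assert (H := is_derive_plus _ _ 0 _ _
                   (is_derive_cpart_ddir_line Om HOm u b nu x0 ep 0 Hu (Hep_Om 0 ltac:(lra)))
                   (is_derive_cpart_Cmult_vanishing eta2 _ 0 b Heta_re Heta_im is_derive_u_ep0
                      (eq_trans (f_equal u (pt_line0 x0 ep)) u_x0_eq0))).
    rewrite pt_line0, !cpart_ddir, Hsym in H; unfold plus in H; cbn in H; rewrite Rplus_0_r in H.
    apply (is_derive_eq0_of_vanishing_right _ 0 h) in H; [exact H | lra |].
    intros s Hs; apply cpart_robin_eq0; lra.
Qed.

Lemma iter_pd_x0_eq0 w : (length w <= 2)%nat -> iter_pd w u x0 = RtoC 0.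
Proof.
  intros Hw; apply C_eq_of_cpart; intros b; rewrite cpart_RtoC0.
  destruct (grad_x0_eq0 b) as [G1 G2], (hess_x0_eq0 b) as (H11 & H12 & H22).
  destruct w as [| b1 [| b2 [| b3 w]]]; cbn in Hw |- *.
  - now rewrite u_x0_eq0, cpart_RtoC0.
  - now destruct b1.
  - destruct b1, b2; rewrite ?(pd1_pd2_comm Om HOm u x0 Hu Hx0); assumption.
  - lia.
Qed.

End Corner.

Theorem theorem5p11
  (Om : R * R -> Prop) (lam : R) (u : R * R -> C)
  (x0 em ep nu : R * R) (h alpha : R) (eta2 : R -> C) :
  open Om ->
  0 < lam ->
  smooth_on Om u ->
  (forall p, Om p -> lap u p = Cmult (RtoC (- lam)) (u p)) ->
  Om x0 ->
  0 < h ->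
  0 < alpha < 1 ->
  fst em ^ 2 + snd em ^ 2 = 1 ->
  ep = rot (alpha * PI) em ->
  (forall t, 0 <= t <= h -> Om (pt_add x0 (pt_scal t ep))) ->
  (forall t, 0 <= t <= h -> Om (pt_add x0 (pt_scal t em))) ->
  C1_on_interval 0 h eta2 ->
  fst nu ^ 2 + snd nu ^ 2 = 1 ->
  fst nu * fst ep + snd nu * snd ep = 0 ->
  (forall t, 0 <= t <= h ->
     Cplus (ddir nu u (pt_add x0 (pt_scal t ep)))
           (Cmult (eta2 t) (u (pt_add x0 (pt_scal t ep)))) = RtoC 0) ->
  (forall t, 0 <= t <= h -> u (pt_add x0 (pt_scal t em)) = RtoC 0) ->
  alpha <> 1/4 -> alpha <> 1/2 -> alpha <> 3/4 ->
  forall w : list bool, (length w <= 2)%nat -> iter_pd w u x0 = RtoC 0.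
Proof.
  intros HOm _ Hu Hlap Hx0 Hh Halpha Hem Hep Hep_Om Hem_Om Heta Hnu Hnu_ep Hrobin Hdirichlet
    Hquarter Hhalf H3quarter.
  destruct (Heta 0 ltac:(lra)) as (Heta_re & Heta_im & _).
  apply (iter_pd_x0_eq0 Om u x0 em ep nu h (alpha * PI) lam eta2); auto.
  - intros ->; cbn in Hnu; lra.
  - now apply cos_mult_PI_neq0.
  - now apply cos_2_mult_PI_neq0.
Qed.
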